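(* Let $A$ be a valuation domain which is not a field, $E$ a non-zero divisible $A$-module and $R=A\propto E$ the trivial ring extension of $A$ by $E$. Then: (1) if $E$ is uniserial, $R$ is a chain ring; (2) if $E$ is torsionfree but not uniserial, $R$ is an fqp-ring which is not arithmetical; (3) if $E$ is neither torsionfree nor uniserial, $R$ is Gaussian but not an fqp-ring.
   Context: The trivial ring extension $R=A\propto E$ is the ring with underlying group $A\times E$ and multiplication $(a,e)(a',e')=(aa',ae'+a'e)$. A module is uniserial if its submodules are totally ordered; a chain ring is a ring uniserial over itself. A ring is arithmetical if its lattice of ideals is distributive. $R$ is Gaussian if $c(fg)=c(f)c(g)$ for all $f,g\in R[X]$, where $c(f)$ is the ideal generated by the coefficients of $f$. A module $V$ is quasi-projective if $\mathrm{Hom}(V,V)\to\mathrm{Hom}(V,V/X)$ is surjective for every submodule $X$ of $V$; a ring is an fqp-ring if every finitely generated ideal is quasi-projective. *)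

From HB Require Import structures.
From mathcomp Require Import all_boot all_order all_algebra.
Set Implicit Arguments. Unset Strict Implicit. Unset Printing Implicit Defensive.
Import GRing.Theory.
Local Open Scope ring_scope.

Definition is_submodule (R : pzRingType) (V : lmodType R) (S : V -> Prop) :=
  [/\ S 0,
      (forall x y, S x -> S y -> S (x + y)) &
      (forall (r : R) x, S x -> S (r *: x))].

Definition subsetP {T : Type} (S1 S2 : T -> Prop) := forall x, S1 x -> S2 x.

Definition uniserial (R : pzRingType) (V : lmodType R) :=
  forall S1 S2 : V -> Prop, is_submodule S1 -> is_submodule S2 ->
    subsetP S1 S2 \/ subsetP S2 S1.

Definition torsionfree (A : idomainType) (E : lmodType A) :=
  forall (a : A) (e : E), a *: e = 0 -> a = 0 \/ e = 0.

Definition divisible (A : idomainType) (E : lmodType A) :=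
  forall (a : A) (e : E), a != 0 -> exists e' : E, e = a *: e'.

Definition is_ideal (R : comPzRingType) (I : R -> Prop) :=
  @is_submodule R R^o I.

Definition chain_ring (R : comPzRingType) := uniserial (R^o : lmodType R).

Definition valuation_domain (A : idomainType) := chain_ring A.

Definition is_field_ring (A : idomainType) :=
  forall a : A, a != 0 -> a \is a GRing.unit.

Definition ideal_gen (R : comPzRingType) (S : R -> Prop) : R -> Prop :=
  fun x => forall I : R -> Prop, is_ideal I -> subsetP S I -> I x.

Definition ideal_add (R : comPzRingType) (I J : R -> Prop) : R -> Prop :=
  fun x => exists i j, [/\ I i, J j & x = i + j].

Definition ideal_cap (R : comPzRingType) (I J : R -> Prop) : R -> Prop :=
  fun x => I x /\ J x.

Definition ideal_mul (R : comPzRingType) (I J : R -> Prop) : R -> Prop :=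
  fun x => exists (n : nat) (a b : 'I_n -> R),
    (forall k, I (a k) /\ J (b k)) /\ x = \sum_(k < n) a k * b k.

Definition ideal_eq (R : comPzRingType) (I J : R -> Prop) :=
  forall x, I x <-> J x.

Definition arithmetical (R : comPzRingType) :=
  forall I J K : R -> Prop, is_ideal I -> is_ideal J -> is_ideal K ->
    ideal_eq (ideal_cap I (ideal_add J K))
             (ideal_add (ideal_cap I J) (ideal_cap I K)).

Definition content (R : comNzRingType) (f : {poly R}) : R -> Prop :=
  ideal_gen (fun x => x \in (f : seq R)).

Definition gaussian (R : comNzRingType) :=
  forall f g : {poly R}, ideal_eq (content (f * g)) (ideal_mul (content f) (content g)).

(* A (finitely generated) ideal I, viewed as an R-module, is quasi-projective:
   for every submodule X of I (i.e. ideal X contained in I) every R-linear map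
   g : I -> I/X lifts to an R-linear map f : I -> I with (f mod X) = g.
   An R-linear map I -> I/X is encoded by a (set-theoretic) lift h : R -> R
   sending I into I and R-linear modulo X on I. *)
Definition quasi_projective_ideal (R : comPzRingType) (I : R -> Prop) :=
  forall X : R -> Prop, is_ideal X -> subsetP X I ->
  forall h : R -> R,
    (forall v, I v -> I (h v)) ->
    (forall v w, I v -> I w -> X (h (v + w) - h v - h w)) ->
    (forall (r v : R), I v -> X (h (r * v) - r * h v)) ->
  exists f : R -> R,
    [/\ (forall v, I v -> I (f v)),
        (forall v w, I v -> I w -> f (v + w) = f v + f w),
        (forall (r v : R), I v -> f (r * v) = r * f v) &
        (forall v, I v -> X (f v - h v))].

Definition fqp_ring (R : comPzRingType) :=
  forall s : seq R, quasi_projective_ideal (ideal_gen (fun x => x \in s)).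

Definition triv_ext (A : comNzRingType) (E : lmodType A) : Type := (A * E)%type.

HB.instance Definition _ (A : comNzRingType) (E : lmodType A) :=
  GRing.Zmodule.on (triv_ext E).

Definition te_one (A : comNzRingType) (E : lmodType A) : triv_ext E := (1, 0).
Definition te_mul (A : comNzRingType) (E : lmodType A) (x y : triv_ext E)
  : triv_ext E := (x.1 * y.1, x.1 *: y.2 + y.1 *: x.2).

Lemma te_mulA (A : comNzRingType) (E : lmodType A) : associative (@te_mul A E).
Proof.
move=> [a e] [b f] [c g]; rewrite /te_mul /=; congr pair; first by rewrite mulrA.
rewrite !scalerDr !scalerA -!addrA (mulrC c a) (mulrC c b).
congr (_ + _); exact: addrC.
Qed.

Lemma te_mulC (A : comNzRingType) (E : lmodType A) : commutative (@te_mul A E).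
Proof. by move=> [a e] [b f]; rewrite /te_mul /= mulrC addrC. Qed.

Lemma te_mul1 (A : comNzRingType) (E : lmodType A) :
  left_id (@te_one A E) (@te_mul A E).
Proof. by move=> [a e]; rewrite /te_mul /= mul1r scale1r scaler0 addr0. Qed.

Lemma te_mulDl (A : comNzRingType) (E : lmodType A) :
  left_distributive (@te_mul A E) +%R.
Proof.
move=> [a e] [b f] [c g]; rewrite /te_mul /=.
congr pair; first by rewrite mulrDl.
by rewrite scalerDl scalerDr addrACA.
Qed.

Lemma te_one_neq0 (A : comNzRingType) (E : lmodType A) : @te_one A E != 0.
Proof. by apply/negP => /eqP [] /eqP; rewrite oner_eq0. Qed.

HB.instance Definition _ (A : comNzRingType) (E : lmodType A) :=
  GRing.Zmodule_isComNzRing.Build (triv_ext E)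
    (@te_mulA A E) (@te_mulC A E) (@te_mul1 A E) (@te_mulDl A E) (@te_one_neq0 A E).

Notation "A \propto E" := (@triv_ext A E) (at level 40, only parsing).

(* Write R = A ⋉ E.  As E is divisible, an x in R with x.1 <> 0 divides every y such
   that x.1 divides y.1 in A, so with the valuation on A most questions about ideals of R
   reduce to principal ideals or to ideals 0 ⋉ M with M an A-submodule of E.
   (1) If E is uniserial, the principal ideals of R are totally ordered.
   (2) A finitely generated ideal is principal, hence quasi-projective, unless all its
   generators lie in 0 ⋉ E; then it is 0 ⋉ M with M finitely generated and torsionfree,
   hence free, since a linear relation over a valuation domain lets one drop a generator.
   For incomparable x, y in E the ideal R(0, x + y) meets R(0, x) and R(0, y) in 0 but
   lies in their sum, so the ideal lattice is not distributive.
   (3) A polynomial with a unit coefficient cancels from coefficientwise membership in an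
   ideal (McCoy); over a valuation domain this makes products of primitive polynomials
   primitive, which gives c(f) c(g) <= c(f g).  Finally take x not in A y and r with
   r x = 0 <> r y: on I = R(0, x) + R(0, y) the map (0, p x + q y) |-> (0, p y) is
   R-linear modulo X = {(0, j y) | j x in A y}, but a lift f would send (0, x) to (0, u y)
   with u a unit, and then f (r (0, x)) = 0 <> (0, r u y). *)

From Pilot Require Import Defs.
From HB Require Import structures.
From mathcomp Require Import all_boot all_order all_algebra.
From mathcomp Require Import zify ring.
From Stdlib Require Import Classical ClassicalEpsilon FunctionalExtensionality PropExtensionality.
Set Implicit Arguments. Unset Strict Implicit. Unset Printing Implicit Defensive.
Import GRing.Theory.
Local Open Scope ring_scope.

Lemma uniserialP (R : pzRingType) (V : lmodType R) :
  uniserial V <-> forall x y : V, (exists r, y = r *: x) \/ (exists r, x = r *: y).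
Proof.
have cyclic_sub (x : V) : is_submodule (fun z => exists r, z = r *: x).
  split; first by exists 0; rewrite scale0r.
  - by move=> _ _ [r ->] [s ->]; exists (r + s); rewrite scalerDl.
  - by move=> r _ [s ->]; exists (r * s); rewrite scalerA.
split=> [Vuni x y | Vcmp S1 S2 [_ _ S1Z] [_ _ S2Z]].
  case: (Vuni _ _ (cyclic_sub x) (cyclic_sub y)) => sub; [right|left];
    by apply: sub; exists 1; rewrite scale1r.
case: (classic (Defs.subsetP S1 S2)) => [?|]; first by left.
move=> /not_all_ex_not [x /(@imply_to_and (S1 x)) [S1x S2'x]].
right=> y S2y; case: (Vcmp x y) => -[r Er].
  by rewrite Er; apply: S1Z.
by case: S2'x; rewrite Er; apply: S2Z.
Qed.

Lemma nonuniserial_incomparable (R : pzRingType) (V : lmodType R) : ~ uniserial V ->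
  exists x y : V, ~ (exists r, y = r *: x) /\ ~ (exists r, x = r *: y).
Proof.
move=> Vnuni; apply: NNPP => no_pair; apply/Vnuni/uniserialP => x y.
apply: NNPP => ncmp; apply: no_pair; exists x, y.
by split=> cmp; apply: ncmp; [left | right].
Qed.

Section Ideals.
Variable R : comPzRingType.
Implicit Types (I J K : R -> Prop) (x y r : R).

Lemma idealP I : is_ideal I <->
  [/\ I 0, (forall x y, I x -> I y -> I (x + y)) & (forall r x, I x -> I (r * x))].
Proof. by []. Qed.

Lemma ideal0 I : is_ideal I -> I 0. Proof. by case. Qed.

Lemma idealD I x y : is_ideal I -> I x -> I y -> I (x + y).
Proof. by case=> _ + _; apply. Qed.

Lemma idealMl I r x : is_ideal I -> I x -> I (r * x).
Proof. by case=> _ _; apply. Qed.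

Lemma idealN I x : is_ideal I -> I x -> I (- x).
Proof. by rewrite -mulN1r; apply: idealMl. Qed.

Lemma idealB I x y : is_ideal I -> I x -> I y -> I (x - y).
Proof. by move=> HI Ix Iy; apply: idealD (idealN HI Iy). Qed.

Lemma ideal_sum I T {s : seq T} (P : pred T) (F : T -> R) :
  is_ideal I -> (forall i, P i -> I (F i)) -> I (\sum_(i <- s | P i) F i).
Proof.
by move=> HI IF; elim/big_ind: _ => //; [apply: ideal0 | move=> x y; apply: idealD].
Qed.

Lemma ideal_ext I J : ideal_eq I J -> I = J.
Proof.
by move=> IJ; apply: functional_extensionality => x; apply: propositional_extensionality (IJ x).
Qed.

Lemma ideal_gen_ideal (S : R -> Prop) : is_ideal (ideal_gen S).
Proof.
apply/idealP; split; first by move=> I HI _; apply: ideal0.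
- by move=> x y Sx Sy I HI SI; apply: idealD (Sx _ HI SI) (Sy _ HI SI).
- by move=> r x Sx I HI SI; apply: idealMl (Sx _ HI SI).
Qed.

Lemma ideal_gen_sub (S : R -> Prop) x : S x -> ideal_gen S x.
Proof. by move=> Sx I _; apply. Qed.

Lemma ideal_gen_min (S : R -> Prop) I :
  is_ideal I -> Defs.subsetP S I -> Defs.subsetP (ideal_gen S) I.
Proof. by move=> HI SI x; apply. Qed.

Lemma colon_ideal I c : is_ideal I -> is_ideal (fun v => I (c * v)).
Proof.
move=> HI; apply/idealP; split; first by rewrite mulr0; apply: ideal0.
  by move=> x y Ix Iy; rewrite mulrDr; apply: idealD.
by move=> r x Ix; rewrite mulrCA; apply: idealMl.
Qed.

Definition principal_ideal x : R -> Prop := fun y => exists r, y = r * x.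

Lemma principal_ideal_ideal x : is_ideal (principal_ideal x).
Proof.
apply/idealP; split; first by exists 0; rewrite mul0r.
- by move=> _ _ [r ->] [s ->]; exists (r + s); rewrite mulrDl.
- by move=> r _ [s ->]; exists (r * s); rewrite mulrA.
Qed.

Lemma ideal_gen_seqP (s : seq R) x :
  ideal_gen (fun y => y \in s) x <-> exists c : 'I_(size s) -> R, x = \sum_i c i * s`_i.
Proof.
split=> [|[c ->]]; last first.
  by apply: ideal_sum (ideal_gen_ideal _) _ => i _;
     apply: idealMl (ideal_gen_ideal _) (ideal_gen_sub (mem_nth 0 _)).
move=> Hx; apply: (Hx (fun x => exists c : 'I_(size s) -> R, x = \sum_i c i * s`_i)).
  apply/idealP; split.
  - by exists (fun _ => 0); rewrite big1 // => i _; rewrite mul0r.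
  - move=> _ _ [c ->] [d ->]; exists (fun i => c i + d i).
    by rewrite -big_split; apply: eq_bigr => i _; rewrite mulrDl.
  - move=> r _ [c ->]; exists (fun i => r * c i).
    by rewrite mulr_sumr; apply: eq_bigr => i _; rewrite mulrA.
move=> y sy; have sy' := sy; rewrite -index_mem in sy'.
exists (fun i => (i == Ordinal sy')%:R).
rewrite (bigD1 (Ordinal sy')) //= eqxx mul1r nth_index // big1 ?addr0 // => i /negbTE ->.
by rewrite mul0r.
Qed.

Lemma ideal_mul_ideal I J : is_ideal I -> is_ideal (ideal_mul I J).
Proof.
move=> HI; apply/idealP; split.
- by exists 0%N, (fun _ => 0), (fun _ => 0); split; [case | rewrite big_ord0].
- move=> _ _ [n [a [b [IJab ->]]]] [m [a' [b' [IJab' ->]]]].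
  exists (n + m)%N, (fun i => match split i with inl j => a j | inr j => a' j end),
                    (fun i => match split i with inl j => b j | inr j => b' j end).
  split; first by move=> k; case: (split k).
  by rewrite big_split_ord; congr (_ + _); apply: eq_bigr => i _;
     rewrite ?(unsplitK (inl _ i)) ?(unsplitK (inr _ i)).
- move=> r _ [n [a [b [IJab ->]]]]; exists n, (fun i => r * a i), b.
  split; last by rewrite mulr_sumr; apply: eq_bigr => i _; rewrite mulrA.
  by move=> k; case: (IJab k) => Ia Jb; split=> //; apply: idealMl.
Qed.

Lemma ideal_mul_min I J K : is_ideal K -> (forall x y, I x -> J y -> K (x * y)) ->
  Defs.subsetP (ideal_mul I J) K.
Proof.
move=> HK IJK _ [n [a [b [IJab ->]]]]; apply: ideal_sum => // i _.
by case: (IJab i); apply: IJK.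
Qed.

Lemma ideal_mulC I J x : ideal_mul I J x -> ideal_mul J I x.
Proof.
case=> n [a [b [IJab ->]]]; exists n, b, a; split; first by move=> k; case: (IJab k).
by apply: eq_bigr => i _; rewrite mulrC.
Qed.
End Ideals.

(* By downward induction on j, every G_j h_n lies in T,
   n being the top degree of h; then G_j h without its top term has smaller size,
   which gives all G_j h_k in T, and finally h_k = v G_j0 h_k. *)
Lemma coefs_in_ideal_cancel (S : comNzRingType) (T : S -> Prop) (G : {poly S}) j0 v :
  is_ideal T -> G`_j0 * v = 1 ->
  forall h : {poly S}, (forall k, T (G * h)`_k) -> forall k, T h`_k.
Proof.
move=> HT Gj0v h; have [n szh] : exists n, (size h <= n)%N by exists (size h).
elim: n h szh => [|n IH] h.
  by rewrite size_poly_leq0 => /eqP -> _ k; rewrite coef0; apply: ideal0.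
move=> szh TGh; have h_gt k : (n < k)%N -> h`_k = 0.
  by move=> ltnk; apply: nth_default; apply: leq_trans ltnk.
suff TGjh : forall j k, T (G`_j * h`_k).
  by move=> k; rewrite -[h`_k]mul1r -Gj0v mulrAC mulrC; apply: idealMl.
move=> j; have [m] := ubnP (size G - j); elim: m j => // m IHm j.
rewrite ltnS => szGj; have [/(nth_default 0) -> k|ltjG] := leqP (size G) j.
  by rewrite mul0r; apply: ideal0.
have lt_j_nj : (j < (n + j).+1)%N by rewrite ltnS leq_addl.
have TGjhn : T (G`_j * h`_n).
  have := TGh (n + j)%N; rewrite coefM (bigD1 (Ordinal lt_j_nj)) //= addnK => Tsum.
  suff Trest : T (\sum_(i < (n + j).+1 | i != Ordinal lt_j_nj) G`_i * h`_(n + j - i)).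
    by have := idealB HT Tsum Trest; rewrite addrK.
  apply: ideal_sum => // i; rewrite -val_eqE /= => neq_ij.
  case: (ltngtP i j) neq_ij => // [ltij|ltji] _.
    by rewrite h_gt ?mulr0; [apply: ideal0 | lia].
  by apply: IHm; lia.
have T_lower : forall k, T (\poly_(k < n) (G`_j * h`_k))`_k.
  apply: IH; first exact: size_poly.
  have -> : \poly_(k < n) (G`_j * h`_k) = G`_j *: h - (G`_j * h`_n) *: 'X^n.
    apply/polyP => k; rewrite coef_poly coefB !coefZ coefXn.
    case: (ltngtP k n) => [ltkn|ltnk|->]; rewrite ?mulr0 ?subr0 //.
      by rewrite h_gt // mulr0.
    by rewrite mulr1 subrr.
  move=> k; rewrite mulrBr -!scalerAr coefB !coefZ.
  by apply: (idealB HT); [apply: idealMl | rewrite mulrC; apply: idealMl].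
move=> k; have := T_lower k; rewrite coef_poly.
case: (ltngtP k n) => [//|ltnk|->] _ //.
by rewrite h_gt // mulr0; apply: ideal0.
Qed.

Section ValuationDomain.
Variable A : idomainType.
Hypothesis Aval : valuation_domain A.
Implicit Types a b : A.

Lemma valuation_dvd_total a b : (exists c, b = c * a) \/ (exists c, a = c * b).
Proof. exact: (iffLR (uniserialP _) Aval a b). Qed.

Lemma nonunitD a b :
  a \isn't a GRing.unit -> b \isn't a GRing.unit -> a + b \isn't a GRing.unit.
Proof.
move=> a_nu b_nu; case: (valuation_dvd_total a b) => -[c ->].
  by rewrite -[X in X + _]mul1r -mulrDl unitrM negb_and a_nu orbT.
by rewrite -[X in _ + X]mul1r -mulrDl unitrM negb_and b_nu orbT.
Qed.

Lemma unitD_nonunit a b :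
  a \is a GRing.unit -> b \isn't a GRing.unit -> a + b \is a GRing.unit.
Proof.
move=> a_u b_nu; apply: contraLR a_u => ab_nu.
by rewrite -(addrK b a); apply: nonunitD; rewrite ?unitrN.
Qed.

Lemma nonunit_ideal : is_ideal (fun a : A => a \isn't a GRing.unit).
Proof.
apply/idealP; split; first by rewrite unitr0.
  by move=> a b; apply: nonunitD.
by move=> r a a_nu; rewrite unitrM negb_and a_nu orbT.
Qed.

Lemma valuation_dvd_min n (c : 'I_n -> A) : (exists i, c i != 0) ->
  exists i0 (d : 'I_n -> A), c i0 != 0 /\ forall i, c i = d i * c i0.
Proof.
case=> i ci_neq0.
suff [i0 dvd_i0] : exists i0, forall i, exists d, c i = d * c i0.
  have dP j : exists d, c j == d * c i0 by case: (dvd_i0 j) => d ->; exists d.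
  exists i0, (fun j => xchoose (dP j)); split=> [|j]; last exact/eqP/(xchooseP (dP j)).
  apply: contra_neq ci_neq0 => ci0_eq0.
  by case: (dvd_i0 i) => d ->; rewrite ci0_eq0 mulr0.
elim: n c i {ci_neq0} => [|n IH] c i; first by case: i.
case: n IH c i => [|n] IH c i.
  by exists ord0 => j; exists 1; rewrite mul1r (ord1 j).
have [i1 dvd_i1] := IH (c \o lift ord0) ord0.
case: (valuation_dvd_total (c ord0) (c (lift ord0 i1))) => -[d cd].
  exists ord0 => j; case: (unliftP ord0 j) => [k ->|->]; last by exists 1; rewrite mul1r.
  by case: (dvd_i1 k) => e /= ->; exists (e * d); rewrite cd mulrA.
exists (lift ord0 i1) => j; case: (unliftP ord0 j) => [k ->|->]; first exact: dvd_i1.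
by exists d.
Qed.

Lemma valuation_unit_coefM (F G : {poly A}) k l :
  F`_k = 1 -> G`_l = 1 -> exists m, (F * G)`_m \is a GRing.unit.
Proof.
move=> Fk1 Gl1; apply: NNPP => no_unit.
have FG_nu m : (G * F)`_m \isn't a GRing.unit.
  by apply/negP => FGm_u; apply: no_unit; exists m; rewrite mulrC.
have Gl_inv : G`_l * 1 = 1 by rewrite mulr1.
by have := coefs_in_ideal_cancel nonunit_ideal Gl_inv FG_nu k; rewrite Fk1 unitr1.
Qed.

End ValuationDomain.

Section TrivialExtension.
Variables (A : comNzRingType) (E : lmodType A).
Local Notation R := (triv_ext E).
Implicit Types (x y : R) (a b : A) (e : E).

Lemma triv_ext_eq x y : x.1 = y.1 -> x.2 = y.2 -> x = y.
Proof. by case: x y => [? ?] [? ?] /= -> ->. Qed.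

Lemma fst_sum I (s : seq I) (P : pred I) (F : I -> R) :
  (\sum_(i <- s | P i) F i).1 = \sum_(i <- s | P i) (F i).1.
Proof. by elim/big_rec2: _ => // i a b _ <-. Qed.

Lemma snd_sum I (s : seq I) (P : pred I) (F : I -> R) :
  (\sum_(i <- s | P i) F i).2 = \sum_(i <- s | P i) (F i).2.
Proof. by elim/big_rec2: _ => // i a b _ <-. Qed.

Definition te_scal a : R := (a, 0).
Definition te_vec e : R := (0, e).

Lemma te_scalD a b : te_scal (a + b) = te_scal a + te_scal b.
Proof. by apply: triv_ext_eq => /=; rewrite ?addr0. Qed.

Lemma te_vecD e e' : te_vec (e + e') = te_vec e + te_vec e'.
Proof. by apply: triv_ext_eq => /=; rewrite ?addr0. Qed.

Lemma te_vecB e e' : te_vec (e - e') = te_vec e - te_vec e'.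
Proof. by apply: triv_ext_eq => /=; rewrite ?subr0. Qed.

Lemma te_vecM x e : x * te_vec e = te_vec (x.1 *: e).
Proof. by apply: triv_ext_eq => /=; rewrite ?mulr0 // scale0r addr0. Qed.

Lemma te_vec_inj : injective te_vec.
Proof. by move=> e e' /(congr1 snd). Qed.

End TrivialExtension.

Section DivisibleExtension.
Variables (A : idomainType) (E : lmodType A).
Local Notation R := (triv_ext E).
Hypothesis Ediv : divisible E.

Lemma triv_ext_dvd (x y : R) :
  x.1 != 0 -> (exists c, y.1 = c * x.1) -> exists r, y = r * x.
Proof.
move=> x1_neq0 [c y1c]; have [e Ee] := Ediv (y.2 - c *: x.2) x1_neq0.
by exists (c, e); apply: triv_ext_eq => //=; rewrite -Ee addrC subrK.
Qed.

Hypothesis Aval : valuation_domain A.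

Lemma triv_ext_chain_ring : uniserial E -> chain_ring R.
Proof.
move=> /uniserialP Euni; apply/uniserialP.
suff principal_total (x y : R) : (exists r, y = r * x) \/ (exists r, x = r * y) by [].
have [x1_0|x1_neq0] := eqVneq x.1 0; have [y1_0|y1_neq0] := eqVneq y.1 0.
- case: (Euni x.2 y.2) => -[c Ec]; [left|right]; exists (te_scal E c);
    by apply: triv_ext_eq; rewrite /= ?x1_0 ?y1_0 ?mulr0 ?scaler0 ?addr0.
- by right; apply: triv_ext_dvd => //; exists 0; rewrite x1_0 mul0r.
- by left; apply: triv_ext_dvd => //; exists 0; rewrite y1_0 mul0r.
- by case: (valuation_dvd_total Aval x.1 y.1) => ?; [left|right]; apply: triv_ext_dvd.
Qed.

End DivisibleExtension.

Section TorsionfreeExtension.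
Variables (A : idomainType) (E : lmodType A).
Local Notation R := (triv_ext E).
Hypotheses (Aval : valuation_domain A) (Etf : torsionfree E).

Section IncomparablePair.
Variables (x y : E).
Hypotheses (y_notin_Ax : ~ exists c, y = c *: x) (x_notin_Ay : ~ exists c, x = c *: y).

Lemma incomparable_scale_eq0 (r t : A) : r *: y = t *: x -> r = 0.
Proof.
move=> ry_tx; apply: NNPP => /eqP r_neq0.
have [t0|t_neq0] := eqVneq t 0.
  move: ry_tx; rewrite t0 scale0r => /Etf [r0|y0]; first by rewrite r0 eqxx in r_neq0.
  by apply: y_notin_Ax; exists 0; rewrite y0 scale0r.
have cancel_scale (a b c : A) (u v : E) :
  a != 0 -> b = c * a -> a *: u = b *: v -> u = c *: v.
  move=> a_neq0 ->; rewrite mulrC -scalerA => /eqP; rewrite -subr_eq0 -scalerBr.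
  move=> /eqP /Etf [a0|/eqP]; first by rewrite a0 eqxx in a_neq0.
  by rewrite subr_eq0 => /eqP.
case: (valuation_dvd_total Aval r t) => -[c tc].
  by apply: y_notin_Ax; exists c; apply: cancel_scale tc ry_tx.
by apply: x_notin_Ay; exists c; apply: cancel_scale tc (esym ry_tx).
Qed.

Lemma principal_sum_cap_principal (r s : R) :
  r * te_vec (x + y) = s * te_vec x -> r * te_vec (x + y) = 0.
Proof.
rewrite !te_vecM => /te_vec_inj; rewrite scalerDr => /(canRL (addKr _)).
rewrite addrC -scaleNr -scalerDl => /incomparable_scale_eq0 ->.
by rewrite !scale0r addr0.
Qed.

End IncomparablePair.

Lemma triv_ext_not_arithmetical : ~ uniserial E -> ~ arithmetical R.
Proof.
move=> /nonuniserial_incomparable [x [y [y_notin_Ax x_notin_Ay]]] Rar.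
pose u := te_vec (x + y).
have u_mem : ideal_cap (principal_ideal u)
    (ideal_add (principal_ideal (te_vec x)) (principal_ideal (te_vec y))) u.
  split; first by exists 1; rewrite mul1r.
  by exists (te_vec x), (te_vec y); split; try exists 1; rewrite ?mul1r -?te_vecD.
have [i [j [[[r ri] [s si]] [[r' rj] [s' sj]] u_ij]]] :=
  iffLR (Rar _ _ _ (principal_ideal_ideal _) (principal_ideal_ideal _)
                   (principal_ideal_ideal _) u) u_mem.
have i0 : i = 0.
  by rewrite ri; apply: (principal_sum_cap_principal y_notin_Ax x_notin_Ay (s := s)); rewrite -ri.
have j0 : j = 0.
  rewrite rj /u addrC; apply: (principal_sum_cap_principal x_notin_Ay y_notin_Ax (s := s')).
  by rewrite addrC -rj.
apply: x_notin_Ay; exists (-1); rewrite scaleN1r; apply/eqP; rewrite -addr_eq0.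
by apply/eqP/te_vec_inj; rewrite -/u u_ij i0 j0 addr0.
Qed.

End TorsionfreeExtension.

Section QuasiProjective.
Variable R : comPzRingType.

Lemma principal_quasi_projective (g : R) : quasi_projective_ideal (principal_ideal g).
Proof.
move=> X HX _ h h_in _ hM; have g_in : principal_ideal g g by exists 1; rewrite mul1r.
have [c hg] := h_in g g_in; exists (fun v => c * v); split.
- by move=> _ [r ->]; exists (c * r); rewrite mulrA.
- by move=> v w _ _; rewrite mulrDr.
- by move=> r v _; rewrite mulrCA.
- move=> _ [r ->]; have := idealN HX (hM r g g_in).
  by rewrite opprB mulrCA -hg.
Qed.

Variables (I X : R -> Prop) (h : R -> R).
Hypotheses (HI : is_ideal I) (HX : is_ideal X).
Hypothesis hD : forall v w, I v -> I w -> X (h (v + w) - h v - h w).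
Hypothesis hM : forall r v, I v -> X (h (r * v) - r * h v).

Lemma lift_sum_mod T (s : seq T) (c u : T -> R) : (forall i, I (u i)) ->
  X (\sum_(i <- s) c i * h (u i) - h (\sum_(i <- s) c i * u i)).
Proof.
move=> Iu; elim: s => [|i s IH].
  by rewrite !big_nil sub0r; have := hD (ideal0 HI) (ideal0 HI); rewrite addr0 subrr sub0r.
rewrite !big_cons.
have I_sum : I (\sum_(j <- s) c j * u j) by apply: ideal_sum => // j _; apply: idealMl.
set S1 := \sum_(j <- s) _; set S2 := \sum_(j <- s) _ in I_sum IH *.
have -> : c i * h (u i) + S1 - h (c i * u i + S2) =
    - (h (c i * u i) - c i * h (u i)) + (S1 - h S2)
    - (h (c i * u i + S2) - h (c i * u i) - h S2) by ring.
apply: (idealB HX); last by apply: hD => //; apply: idealMl.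
by apply: (idealD HX) IH; apply: (idealN HX); apply: hM.
Qed.

End QuasiProjective.

Section VecIdeal.
Variables (A : comNzRingType) (E : lmodType A).
Local Notation R := (triv_ext E).

Lemma mul_fst0 (x H : R) : H.1 = 0 -> x * H = te_scal E x.1 * H.
Proof. by move=> H1; apply: triv_ext_eq => /=; rewrite ?H1 ?scale0r ?scaler0 ?addr0. Qed.

Definition lin_comb n (e : 'I_n -> E) (m : E) := exists c : 'I_n -> A, m = \sum_i c i *: e i.

Definition vec_ideal n (e : 'I_n -> E) : R -> Prop := fun x => x.1 = 0 /\ lin_comb e x.2.

Lemma vec_ideal_ideal n (e : 'I_n -> E) : is_ideal (vec_ideal e).
Proof.
apply/idealP; split.
- by split=> //; exists (fun=> 0); rewrite big1 // => i _; rewrite scale0r.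
- move=> x y [x1 [c xc]] [y1 [d yd]]; split; first by rewrite /= x1 y1 addr0.
  exists (fun i => c i + d i); rewrite /= xc yd -big_split.
  by apply: eq_bigr => i _; rewrite scalerDl.
- move=> r x [x1 [c xc]]; split; first by rewrite /= x1 mulr0.
  exists (fun i => r.1 * c i); rewrite /= x1 scale0r addr0 xc scaler_sumr.
  by apply: eq_bigr => i _; rewrite scalerA.
Qed.

Lemma vec_ideal_gen n (e : 'I_n -> E) i : vec_ideal e (te_vec (e i)).
Proof.
split=> //; exists (fun j => (j == i)%:R) => /=.
by rewrite (bigD1 i) //= eqxx scale1r big1 ?addr0 // => j /negbTE ->; rewrite scale0r.
Qed.

Definition vec_coord n (e : 'I_n -> E) (v : R) : 'I_n -> A :=
  epsilon (inhabits (fun=> 0)) (fun c => v.2 = \sum_i c i *: e i).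

Lemma vec_coordP n (e : 'I_n -> E) v : vec_ideal e v -> v.2 = \sum_i vec_coord e v i *: e i.
Proof. by case=> _; apply: epsilon_spec. Qed.

Lemma vec_ideal_coord_sum n (e : 'I_n -> E) v :
  vec_ideal e v -> v = \sum_i te_scal E (vec_coord e v i) * te_vec (e i).
Proof.
move=> ev; have [v1 _] := ev; apply: triv_ext_eq.
  by rewrite fst_sum v1 big1 // => i _; rewrite /= mulr0.
by rewrite snd_sum (vec_coordP ev); apply: eq_bigr => i _; rewrite /= scaler0 addr0.
Qed.

Section FreeFamily.
Variables (n : nat) (e : 'I_n -> E).
Hypothesis e_free : forall c : 'I_n -> A, \sum_i c i *: e i = 0 -> forall i, c i = 0.

Lemma free_coord_eq (c : 'I_n -> A) v :
  vec_ideal e v -> v.2 = \sum_i c i *: e i -> vec_coord e v =1 c.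
Proof.
move=> ev vc i; apply/eqP; rewrite -subr_eq0; apply/eqP.
have diff0 : \sum_j (vec_coord e v j - c j) *: e j = 0.
  by under eq_bigr do rewrite scalerBl; rewrite sumrB -vc -vec_coordP ?subrr.
exact: (e_free diff0 i).
Qed.

Lemma vec_coordD v w : vec_ideal e v -> vec_ideal e w ->
  vec_coord e (v + w) =1 fun i => vec_coord e v i + vec_coord e w i.
Proof.
move=> ev ew; apply: free_coord_eq; first exact: (idealD (vec_ideal_ideal e) ev ew).
rewrite /= (vec_coordP ev) (vec_coordP ew) -big_split.
by apply: eq_bigr => i _; rewrite scalerDl.
Qed.

Lemma vec_coordM r v : vec_ideal e v ->
  vec_coord e (r * v) =1 fun i => r.1 * vec_coord e v i.
Proof.
move=> ev; have [v1 _] := ev.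
apply: free_coord_eq; first exact: (idealMl r (vec_ideal_ideal e) ev).
rewrite /= v1 scale0r addr0 (vec_coordP ev) scaler_sumr.
by apply: eq_bigr => i _; rewrite scalerA.
Qed.

Lemma free_vec_ideal_quasi_projective : quasi_projective_ideal (vec_ideal e).
Proof.
move=> X HX _ h h_in hD hM; have HI := vec_ideal_ideal e.
have h_fst0 i : (h (te_vec (e i))).1 = 0 by case: (h_in _ (vec_ideal_gen e i)).
exists (fun v => \sum_i te_scal E (vec_coord e v i) * h (te_vec (e i))); split.
- move=> v _; apply: (ideal_sum HI) => i _.
  by apply: (idealMl _ HI); apply: h_in; apply: vec_ideal_gen.
- move=> v w ev ew; rewrite -big_split; apply: eq_bigr => i _.
  by rewrite vec_coordD // te_scalD mulrDl.
- move=> r v ev; rewrite mulr_sumr; apply: eq_bigr => i _.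
  by rewrite vec_coordM // mulrA [RHS](mul_fst0 _ (h_fst0 i)).
- move=> v ev; rewrite {2}(vec_ideal_coord_sum ev).
  exact: (lift_sum_mod HI HX hD hM _ _ (vec_ideal_gen e)).
Qed.

End FreeFamily.

Lemma lin_comb_drop n (e : 'I_n.+1 -> E) (d : 'I_n.+1 -> A) i0 :
  \sum_i d i *: e i = 0 -> d i0 = 1 ->
  forall m, lin_comb e m <-> lin_comb (e \o lift i0) m.
Proof.
rewrite (bigD1_ord i0) //= => /eqP; rewrite addr_eq0 => /eqP + di0.
rewrite di0 scale1r => ei0 m; split=> -[c ->]; last first.
  exists (fun i => if unlift i0 i is Some j then c j else 0).
  by rewrite (bigD1_ord i0) //= unlift_none scale0r add0r; apply: eq_bigr => j _; rewrite liftK.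
exists (fun j => c (lift i0 j) - c i0 * d (lift i0 j)).
rewrite (bigD1_ord i0) //= ei0 scalerN scaler_sumr -sumrN -big_split /=.
by apply: eq_bigr => j _; rewrite scalerA scalerBl addrC.
Qed.

End VecIdeal.

Section FiniteGeneration.
Variables (A : idomainType) (E : lmodType A).
Local Notation R := (triv_ext E).
Hypotheses (Aval : valuation_domain A) (Etf : torsionfree E).

Lemma vec_ideal_quasi_projective n (e : 'I_n -> E) : quasi_projective_ideal (vec_ideal e).
Proof.
elim: n e => [|n IH] e; first by apply: free_vec_ideal_quasi_projective => c _ [].
case: (classic (forall c : 'I_n.+1 -> A, \sum_i c i *: e i = 0 -> forall i, c i = 0)).
  exact: free_vec_ideal_quasi_projective.
move=> /not_all_ex_not [c /(@imply_to_and (_ = 0)) [ce0 /not_all_ex_not [i /eqP ci_neq0]]].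
have [i0 [d [ci0_neq0 cd]]] := valuation_dvd_min Aval (ex_intro _ i ci_neq0).
have de0 : \sum_j d j *: e j = 0.
  have /Etf [ci0_0|//] : c i0 *: \sum_j d j *: e j = 0.
    by rewrite scaler_sumr -[RHS]ce0; apply: eq_bigr => j _; rewrite scalerA mulrC -cd.
  by rewrite ci0_0 eqxx in ci0_neq0.
have di0 : d i0 = 1 by apply: (mulIf ci0_neq0); rewrite mul1r -cd.
suff -> : vec_ideal e = vec_ideal (e \o lift i0) by apply: IH.
by apply: ideal_ext => x; rewrite /vec_ideal (lin_comb_drop de0 di0).
Qed.

Hypothesis Ediv : divisible E.

Lemma triv_ext_fqp : fqp_ring R.
Proof.
move=> s.
case: (classic (exists i : 'I_(size s), (s`_i).1 != 0)) => [s_fst|s_vec].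
  have [i0 [d [si0_neq0 sd]]] := valuation_dvd_min Aval s_fst.
  suff -> : ideal_gen (fun y => y \in s) = principal_ideal s`_i0.
    exact: principal_quasi_projective.
  apply: ideal_ext => x; split; last first.
    by case=> r ->; apply: (idealMl r (ideal_gen_ideal _)); apply: ideal_gen_sub; apply: mem_nth.
  apply: (ideal_gen_min (principal_ideal_ideal _)) => y ys; have := ys.
  rewrite -index_mem => lt_ys; apply: triv_ext_dvd => //.
  by exists (d (Ordinal lt_ys)); rewrite -sd /= nth_index.
have s_fst0 (i : 'I_(size s)) : (s`_i).1 = 0.
  by apply: NNPP => /eqP si_neq0; apply: s_vec; exists i.
suff -> : ideal_gen (fun y => y \in s) = vec_ideal (fun i : 'I_(size s) => (s`_i).2).
  exact: vec_ideal_quasi_projective.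
apply: ideal_ext => x; rewrite ideal_gen_seqP; split=> [[c ->]|[x1 [c xc]]].
  split; first by rewrite fst_sum big1 // => i _; rewrite /= s_fst0 mulr0.
  exists (fun i => (c i).1); rewrite snd_sum; apply: eq_bigr => i _.
  by rewrite /= s_fst0 scale0r addr0.
exists (fun i => te_scal E (c i)); apply: triv_ext_eq.
  by rewrite fst_sum x1 big1 // => i _; rewrite /= s_fst0 mulr0.
by rewrite xc snd_sum; apply: eq_bigr => i _; rewrite /= s_fst0 scaler0 addr0.
Qed.

End FiniteGeneration.

Section NotQuasiProjective.
Variables (A : idomainType) (E : lmodType A).
Local Notation R := (triv_ext E).
Hypothesis Aval : valuation_domain A.
Variables (x y : E).
Hypothesis x_notin_Ay : ~ exists c, x = c *: y.

Let two_gen : R -> Prop := ideal_gen (fun v => v \in [:: te_vec x; te_vec y]).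

Lemma two_genP v : two_gen v <-> exists p q, v = te_vec (p *: x + q *: y).
Proof.
rewrite /two_gen ideal_gen_seqP; split=> [[c ->]|[p [q ->]]].
  exists (c ord0).1, (c (lift ord0 ord0)).1.
  by rewrite !big_ord_recl big_ord0 /= addr0 !te_vecM te_vecD.
exists (fun i => te_scal E (if i == ord0 then p else q)).
by rewrite !big_ord_recl big_ord0 /= addr0 !te_vecM te_vecD.
Qed.

Let conductor (j : A) := exists q, j *: x = q *: y.

Lemma conductor_nonunit j : conductor j -> j \isn't a GRing.unit.
Proof.
case=> q jxq; apply/negP => j_unit; apply: x_notin_Ay; exists (j^-1 * q).
by rewrite -scalerA -jxq scalerA mulVr ?scale1r.
Qed.

Lemma conductor_coord_diff p q p' q' :
  p *: x + q *: y = p' *: x + q' *: y -> conductor (p - p').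
Proof.
move=> pq_eq; exists (q' - q); rewrite !scalerBl; apply/eqP.
by rewrite -subr_eq0 opprB addrACA -opprD pq_eq subrr.
Qed.

Let conductor_vec (v : R) := exists j, conductor j /\ v = te_vec (j *: y).

Lemma conductor_vec_ideal : is_ideal conductor_vec.
Proof.
apply/idealP; split; first by exists 0; split; [exists 0; rewrite !scale0r | rewrite scale0r].
  move=> _ _ [j [[q jq] ->]] [j' [[q' jq'] ->]]; exists (j + j'); split.
    by exists (q + q'); rewrite !scalerDl jq jq'.
  by rewrite scalerDl te_vecD.
move=> r _ [j [[q jq] ->]]; exists (r.1 * j); split; last by rewrite te_vecM scalerA.
by exists (r.1 * q); rewrite -!scalerA jq.
Qed.

Lemma conductor_vec_sub : Defs.subsetP conductor_vec two_gen.
Proof. by move=> _ [j [_ ->]]; apply/two_genP; exists 0, j; rewrite scale0r add0r. Qed.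

Let coordx (v : R) : A :=
  epsilon (inhabits 0) (fun p => exists q, v = te_vec (p *: x + q *: y)).

Lemma coordxP v : two_gen v -> exists q, v = te_vec (coordx v *: x + q *: y).
Proof.
move=> /two_genP [p vp].
by apply: (epsilon_spec _ (fun p => exists q, v = te_vec (p *: x + q *: y))); exists p.
Qed.

Lemma coordx_conductor v p q :
  two_gen v -> v = te_vec (p *: x + q *: y) -> conductor (coordx v - p).
Proof.
move=> v_in vpq; have [q' vq'] := coordxP v_in.
by apply: (conductor_coord_diff (q := q') (q' := q)); apply: te_vec_inj; rewrite -vq'.
Qed.

Let coordx_lift (v : R) := te_vec (coordx v *: y).

Lemma coordx_lift_in v : two_gen v -> two_gen (coordx_lift v).
Proof. by move=> _; apply/two_genP; exists 0, (coordx v); rewrite scale0r add0r. Qed.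

Lemma coordx_lift_additive_mod v w : two_gen v -> two_gen w ->
  conductor_vec (coordx_lift (v + w) - coordx_lift v - coordx_lift w).
Proof.
move=> v_in w_in; have [q vq] := coordxP v_in; have [q' wq'] := coordxP w_in.
exists (coordx (v + w) - (coordx v + coordx w)); split.
  apply: (coordx_conductor (q := q + q')); first exact: (idealD (ideal_gen_ideal _) v_in w_in).
  by rewrite {1}vq {1}wq' -te_vecD addrACA -!scalerDl.
by rewrite /coordx_lift -!te_vecB -!scalerBl opprD addrA.
Qed.

Lemma coordx_lift_linear_mod r v : two_gen v ->
  conductor_vec (coordx_lift (r * v) - r * coordx_lift v).
Proof.
move=> v_in; have [q vq] := coordxP v_in.
exists (coordx (r * v) - r.1 * coordx v); split.
  apply: (coordx_conductor (q := r.1 * q)); first exact: (idealMl r (ideal_gen_ideal _) v_in).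
  by rewrite {1}vq te_vecM scalerDr !scalerA.
by rewrite /coordx_lift te_vecM -te_vecB scalerA -scalerBl.
Qed.

Lemma two_gen_not_quasi_projective r0 :
  r0 *: x = 0 -> r0 *: y != 0 -> ~ quasi_projective_ideal two_gen.
Proof.
move=> r0x0 r0y_neq0 gen_qp.
have [f [_ fD fM f_lift]] := gen_qp _ conductor_vec_ideal conductor_vec_sub _
  coordx_lift_in coordx_lift_additive_mod coordx_lift_linear_mod.
have f0 : f 0 = 0.
  by apply: (addIr (f 0)); rewrite add0r -fD ?addr0 //; apply: ideal0 (ideal_gen_ideal _).
have x_in : two_gen (te_vec x).
  by apply/two_genP; exists 1, 0; rewrite scale1r scale0r addr0.
have [j [j_cond fx]] := f_lift _ x_in.
have cx1_cond : conductor (coordx (te_vec x) - 1).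
  by apply: (coordx_conductor (q := 0)) => //; rewrite scale1r scale0r addr0.
have cx_unit : coordx (te_vec x) \is a GRing.unit.
  by rewrite -(subrK 1 (coordx _)) addrC unitD_nonunit ?unitr1 ?conductor_nonunit.
have jcx_unit : j + coordx (te_vec x) \is a GRing.unit.
  by rewrite addrC unitD_nonunit ?conductor_nonunit.
have : te_scal E r0 * f (te_vec x) = 0 by rewrite -fM // te_vecM /= r0x0 -f0.
rewrite -(subrK (coordx_lift (te_vec x)) (f _)) fx -te_vecD -scalerDl te_vecM /= scalerA.
move=> /(congr1 snd) /= r0jy0; apply/(negP r0y_neq0)/eqP.
rewrite -[r0 *: y]scale1r -(mulVr jcx_unit) -scalerA (scalerA _ r0) mulrC.
by rewrite r0jy0 scaler0.
Qed.

End NotQuasiProjective.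

Section TorsionExtension.
Variables (A : idomainType) (E : lmodType A).
Local Notation R := (triv_ext E).
Hypotheses (Aval : valuation_domain A) (Ediv : divisible E).

Lemma torsion_incomparable_witness : ~ torsionfree E -> ~ uniserial E ->
  exists (x y : E) (r0 : A), [/\ ~ exists c, x = c *: y, r0 *: x = 0 & r0 *: y != 0].
Proof.
move=> Entf /nonuniserial_incomparable [e1 [e2 [e2_notin e1_notin]]].
have e2_neq0 : e2 != 0 by apply/eqP => e20; apply: e2_notin; exists 0; rewrite e20 scale0r.
case: (classic (exists t, t != 0 /\ t *: e1 = 0)) => [[t [t_neq0 te1]]|e1_tf].
  have [y e2y] := Ediv e2 t_neq0; exists e1, y, t; split=> //; last by rewrite -e2y.
  case=> c e1c; case: (valuation_dvd_total Aval c t) => -[d cd].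
    by apply: e2_notin; exists d; rewrite e2y cd -scalerA -e1c.
  by apply: e1_notin; exists d; rewrite e1c cd -scalerA -e2y.
have [a [e [ae0 a_neq0 e_neq0]]] : exists (a : A) (e : E), [/\ a *: e = 0, a != 0 & e != 0].
  apply: NNPP => no_torsion; apply: Entf => a e ae0.
  case: (eqVneq a 0) => [|a_neq0]; first by left.
  by right; apply: NNPP => /eqP e_neq0; apply: no_torsion; exists a, e.
exists e, e1, a; split=> //.
  case=> c ec; move: ae0; rewrite ec scalerA => ace1.
  have /eqP : a * c = 0 by apply: NNPP => /eqP ac_neq0; apply: e1_tf; exists (a * c).
  by rewrite mulf_eq0 (negbTE a_neq0) => /eqP c0; rewrite ec c0 scale0r eqxx in e_neq0.
by apply/eqP => ae1; apply: e1_tf; exists a.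
Qed.

Lemma triv_ext_not_fqp : ~ torsionfree E -> ~ uniserial E -> ~ fqp_ring R.
Proof.
move=> Entf Enuni Rfqp.
have [x [y [r0 [x_notin_Ay r0x r0y]]]] := torsion_incomparable_witness Entf Enuni.
exact: (two_gen_not_quasi_projective Aval x_notin_Ay r0x r0y).
Qed.

End TorsionExtension.

Section Content.
Variable S : comNzRingType.
Implicit Types f g : {poly S}.

Lemma coef_content f i : content f f`_i.
Proof.
have [lt_i_f|le_f_i] := ltnP i (size f); first by apply: ideal_gen_sub; apply: mem_nth.
by rewrite nth_default //; apply: ideal0 (ideal_gen_ideal _).
Qed.

Lemma content_min f (I : S -> Prop) :
  is_ideal I -> (forall i, I f`_i) -> Defs.subsetP (content f) I.
Proof.
by move=> HI fI; apply: ideal_gen_min => // x /(nth_index 0) <-.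
Qed.

Lemma content_mul_sub f g :
  Defs.subsetP (content (f * g)) (ideal_mul (content f) (content g)).
Proof.
apply: content_min; first by apply: ideal_mul_ideal (ideal_gen_ideal _).
move=> k; rewrite coefM; exists k.+1, (fun i : 'I_k.+1 => f`_i), (fun i : 'I_k.+1 => g`_(k - i)).
by split=> // i; split; apply: coef_content.
Qed.

End Content.

Section Gaussian.
Variables (A : idomainType) (E : lmodType A).
Local Notation R := (triv_ext E).
Hypotheses (Aval : valuation_domain A) (Ediv : divisible E).
Implicit Types f g : {poly R}.

Lemma fst_principal_ideal (a : A) : is_ideal (fun x : R => principal_ideal a x.1).
Proof.
apply/idealP; split; first by exists 0; rewrite mul0r.
  by move=> x y [d xd] [d' yd']; exists (d + d'); rewrite /= xd yd' mulrDl.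
by move=> r x [d xd]; exists (r.1 * d); rewrite /= xd mulrA.
Qed.

Definition vec_coefs f := forall i, (f`_i).1 = 0.

Lemma fst_coef_factor f : ~ vec_coefs f ->
  exists k (F : {poly A}), [/\ (f`_k).1 != 0, F`_k = 1 & forall i, (f`_i).1 = F`_i * (f`_k).1].
Proof.
move=> /not_all_ex_not [i /eqP fi_neq0].
have lt_i_f : (i < size f)%N.
  by rewrite ltnNge; apply: contra fi_neq0 => /(nth_default 0) ->.
have [k [d [fk_neq0 fd]]] := valuation_dvd_min Aval
  (ex_intro (fun j : 'I_(size f) => (f`_j).1 != 0) (Ordinal lt_i_f) fi_neq0).
have dP j : exists e, (f`_j).1 == e * (f`_k).1.
  have [lt_j_f|le_f_j] := ltnP j (size f).
    by exists (d (Ordinal lt_j_f)); rewrite (fd (Ordinal lt_j_f)).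
  by exists 0; rewrite nth_default ?mul0r.
pose F := \poly_(j < size f) xchoose (dP j).
have fF j : (f`_j).1 = F`_j * (f`_k).1.
  rewrite coef_poly; have [lt_j_f|le_f_j] := ltnP j (size f); first exact/eqP/(xchooseP (dP j)).
  by rewrite nth_default ?mul0r.
by exists k, F; split=> //; apply: (mulIf fk_neq0); rewrite mul1r -fF.
Qed.

Lemma content_mul_sup_nvec f g : ~ vec_coefs f -> ~ vec_coefs g ->
  Defs.subsetP (ideal_mul (content f) (content g)) (content (f * g)).
Proof.
move=> f_nvec g_nvec.
have [k [F [fk_neq0 Fk fF]]] := fst_coef_factor f_nvec.
have [l [G [gl_neq0 Gl gG]]] := fst_coef_factor g_nvec.
have [m FGm_unit] := valuation_unit_coefM Aval Fk Gl.
have fgm : ((f * g)`_m).1 = (F * G)`_m * ((f`_k).1 * (g`_l).1).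
  rewrite coefM fst_sum coefM mulr_suml; apply: eq_bigr => i _.
  by rewrite /= fF gG mulrACA.
have fgm_neq0 : ((f * g)`_m).1 != 0.
  by rewrite fgm !mulf_neq0 //; apply: contraTneq FGm_unit => ->; rewrite unitr0.
apply: ideal_mul_min; first exact: ideal_gen_ideal.
move=> x y fx gy.
have [dx xd] := content_min (fst_principal_ideal (f`_k).1) (fun i => ex_intro _ _ (fF i)) fx.
have [dy yd] := content_min (fst_principal_ideal (g`_l).1) (fun i => ex_intro _ _ (gG i)) gy.
have [r ->] : exists r, x * y = r * (f * g)`_m.
  apply: triv_ext_dvd => //; exists (dx * dy * ((F * G)`_m)^-1).
  by rewrite fgm /= xd yd mulrACA -!mulrA mulKr.
by apply: (idealMl r (ideal_gen_ideal _)); apply: coef_content.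
Qed.

Lemma content_vec_coefs f x : vec_coefs f -> content f x -> x.1 = 0.
Proof.
move=> f_vec /(content_min (fst_principal_ideal 0)) [|d ->]; last by rewrite mulr0.
by move=> i; exists 0; rewrite f_vec mulr0.
Qed.

Lemma content_mul_sup_vec f g : vec_coefs f -> vec_coefs g ->
  Defs.subsetP (ideal_mul (content f) (content g)) (content (f * g)).
Proof.
move=> f_vec g_vec; apply: ideal_mul_min; first exact: ideal_gen_ideal.
move=> x y /(content_vec_coefs f_vec) x1 /(content_vec_coefs g_vec) y1.
have -> : x * y = 0 by apply: triv_ext_eq; rewrite /= x1 y1 ?mulr0 ?scale0r ?addr0.
exact: ideal0 (ideal_gen_ideal _).
Qed.

Lemma content_mul_sup_vec_nvec f g : vec_coefs f -> ~ vec_coefs g ->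
  Defs.subsetP (ideal_mul (content f) (content g)) (content (f * g)).
Proof.
move=> f_vec g_nvec; have [l [G [_ Gl gG]]] := fst_coef_factor g_nvec.
set b := (g`_l).1 in gG; pose Gs := map_poly (te_scal E) G.
have Gs_coef j : Gs`_j = te_scal E G`_j by rewrite coef_map_id0.
have fg_coef k : (f * g)`_k = te_scal E b * (Gs * f)`_k.
  rewrite mulrC !coefM mulr_sumr; apply: eq_bigr => i _; rewrite Gs_coef.
  by apply: triv_ext_eq; rewrite /= f_vec gG ?mulr0 ?scale0r ?scaler0 ?addr0 ?scalerA 1?mulrC.
have Hcolon := colon_ideal (te_scal E b) (ideal_gen_ideal (fun v => v \in (f * g : seq R))).
have f_colon : forall i, content (f * g) (te_scal E b * f`_i).
  apply: (coefs_in_ideal_cancel (G := Gs) (j0 := l) (v := 1) Hcolon).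
    by rewrite mulr1 Gs_coef Gl.
  by move=> k; rewrite -fg_coef; apply: coef_content.
apply: ideal_mul_min; first exact: ideal_gen_ideal.
move=> x y fx gy; have x1 := content_vec_coefs f_vec fx.
have bx := content_min Hcolon f_colon fx.
have [dy yd] := content_min (fst_principal_ideal b) (fun i => ex_intro _ _ (gG i)) gy.
have -> : x * y = te_scal E dy * (te_scal E b * x).
  by apply: triv_ext_eq; rewrite /= x1 yd ?mulr0 ?mul0r ?scale0r ?scaler0 ?addr0 ?add0r ?scalerA.
exact: (idealMl _ (ideal_gen_ideal _) bx).
Qed.

Lemma triv_ext_gaussian : gaussian R.
Proof.
move=> f g x; split; first exact: content_mul_sub.
case: (classic (vec_coefs f)) => f_vec; case: (classic (vec_coefs g)) => g_vec.
- exact: content_mul_sup_vec.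
- exact: content_mul_sup_vec_nvec.
- by move/ideal_mulC; rewrite mulrC; apply: content_mul_sup_vec_nvec.
- exact: content_mul_sup_nvec.
Qed.

End Gaussian.

Theorem corollary4p3 (A : idomainType) (E : lmodType A) :
  valuation_domain A -> ~ is_field_ring A ->
  divisible E -> (exists e : E, e <> 0) ->
  [/\ (uniserial E -> chain_ring (triv_ext E)),
      (torsionfree E -> ~ uniserial E ->
         fqp_ring (triv_ext E) /\ ~ arithmetical (triv_ext E)) &
      (~ torsionfree E -> ~ uniserial E ->
         gaussian (triv_ext E) /\ ~ fqp_ring (triv_ext E))].
Proof.
move=> Aval _ Ediv _; split.
- exact: triv_ext_chain_ring.
- by move=> Etf Enuni; split; [exact: triv_ext_fqp | exact: triv_ext_not_arithmetical].
- by move=> Entf Enuni; split; [exact: triv_ext_gaussian | exact: triv_ext_not_fqp].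
Qed.
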